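(* Let $\mathbb{K}$ be a field, $q\in\mathbb{K}^*$ not a root of unity, $n\geq 3$, and $R=\mathcal{O}_q(M_n)$. Let $\sigma$ be a $\mathbb{K}$-algebra automorphism of $R$ such that there exist nonzero scalars $\lambda_{i,\alpha}\in\mathbb{K}^*$ ($1\le i,\alpha\le n$) with $\sigma(Y_{i,\alpha})-\lambda_{i,\alpha}Y_{i,\alpha}\in R_{\geq 2}$ for all $(i,\alpha)$. Then there exists a torus automorphism $\sigma_h$ of $R$ such that $\sigma_h\circ\sigma(Y_{i,\alpha})-Y_{i,\alpha}\in R_{\geq 2}$ for all $(i,\alpha)$.
   Context: $\mathcal{O}_q(M_n)$ is the $\mathbb{K}$-algebra generated by $Y_{i,\alpha}$, $1\le i,\alpha\le n$, subject to: $Y_{i,\beta}Y_{i,\alpha}=q^{-1}Y_{i,\alpha}Y_{i,\beta}$ for $\alpha<\beta$; $Y_{j,\alpha}Y_{i,\alpha}=q^{-1}Y_{i,\alpha}Y_{j,\alpha}$ for $i<j$; $Y_{j,\beta}Y_{i,\alpha}=Y_{i,\alpha}Y_{j,\beta}$ for $i<j$, $\alpha>\beta$; $Y_{j,\beta}Y_{i,\alpha}=Y_{i,\alpha}Y_{j,\beta}-(q-q^{-1})Y_{i,\beta}Y_{j,\alpha}$ for $i<j$, $\alpha<\beta$. It is $\mathbb{N}$-graded $R=\bigoplus_{i\in\mathbb{N}}R_i$ with each $Y_{i,\alpha}$ of degree 1, and $R_{\geq d}:=\bigoplus_{i\ge d}R_i$. For $h=(a_1,\dots,a_n,b_1,\dots,b_{n-1})\in(\mathbb{K}^*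 )^{2n-1}$, the torus automorphism $\sigma_h$ is defined by $\sigma_h(Y_{i,\alpha})=a_ib_\alpha Y_{i,\alpha}$ if $\alpha<n$ and $\sigma_h(Y_{i,n})=a_iY_{i,n}$; the torus automorphisms form a subgroup $\mathcal{H}$ of $\mathrm{Aut}(R)$. *)

From HB Require Import structures.
From mathcomp Require Import all_boot all_order all_algebra.
Set Implicit Arguments. Unset Strict Implicit. Unset Printing Implicit Defensive.
Import Order.TTheory GRing.Theory Num.Theory.
Local Open Scope ring_scope.

Definition alg_hom (K : fieldType) (A B : algType K) (f : A -> B) : Prop :=
  [/\ forall x y, f (x + y) = f x + f y,
      forall x y, f (x * y) = f x * f y,
      f 1 = 1
    & forall (k : K) x, f (k *: x) = k *: f x].

Definition alg_aut (K : fieldType) (A : algType K) (f : A -> A) : Prop :=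
  alg_hom f /\ bijective f.

(* The defining relations of O_q(M_n) on a family Z_{i,alpha}
   (indices 1..n are represented by 'I_n = {0..n-1}). *)
Definition qmat_rel (K : fieldType) (q : K) (n : nat) (A : algType K)
    (Z : 'I_n -> 'I_n -> A) : Prop :=
  [/\ forall (i a b : 'I_n), (a < b)%N -> Z i b * Z i a = q^-1 *: (Z i a * Z i b),
      forall (i j a : 'I_n), (i < j)%N -> Z j a * Z i a = q^-1 *: (Z i a * Z j a),
      forall (i j a b : 'I_n), (i < j)%N -> (b < a)%N -> Z j b * Z i a = Z i a * Z j b
    & forall (i j a b : 'I_n), (i < j)%N -> (a < b)%N ->
        Z j b * Z i a = Z i a * Z j b - (q - q^-1) *: (Z i b * Z j a)].

(* (R, Y) is the K-algebra presented by generators Y_{i,alpha} and the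
   relations above, i.e. (R, Y) satisfies the universal property of O_q(M_n). *)
Definition is_Oq_Mn (K : fieldType) (q : K) (n : nat) (R : algType K)
    (Y : 'I_n -> 'I_n -> R) : Prop :=
  qmat_rel q Y /\
  forall (A : algType K) (Z : 'I_n -> 'I_n -> A), qmat_rel q Z ->
    (exists f : R -> A, alg_hom f /\ forall i a, f (Y i a) = Z i a) /\
    (forall f g : R -> A, alg_hom f -> alg_hom g ->
       (forall i a, f (Y i a) = Z i a) -> (forall i a, g (Y i a) = Z i a) ->
       f =1 g).

Definition qmono (K : fieldType) (n : nat) (R : algType K)
    (Y : 'I_n -> 'I_n -> R) (w : seq ('I_n * 'I_n)) : R :=
  \prod_(p <- w) Y p.1 p.2.

(* x \in R_{>= d}: x is a finite linear combination of monomials of degree >= d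
   (R_i is the span of the monomials of degree i). *)
Definition Rge (K : fieldType) (n : nat) (R : algType K)
    (Y : 'I_n -> 'I_n -> R) (d : nat) (x : R) : Prop :=
  exists s : seq (K * seq ('I_n * 'I_n)),
    all (fun c => (d <= size c.2)%N) s /\
    x = \sum_(c <- s) c.1 *: qmono Y c.2.

(* tau is the torus automorphism sigma_h, h = (a_1..a_n, b_1..b_{n-1}):
   sigma_h(Y_{i,alpha}) = a_i b_alpha Y_{i,alpha} (alpha < n),
   sigma_h(Y_{i,n}) = a_i Y_{i,n}.  Here b is indexed by 'I_n but only
   b_alpha with alpha < n-1 (0-based) are used. *)
Definition torus_factor (K : fieldType) (n : nat) (a b : 'I_n -> K) (i al : 'I_n) : K :=
  a i * (if (al < n.-1)%N then b al else 1).

Definition is_torus_aut (K : fieldType) (n : nat) (R : algType K)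
    (Y : 'I_n -> 'I_n -> R) (tau : R -> R) : Prop :=
  exists a b : 'I_n -> K,
    [/\ forall i, a i != 0,
        forall al : 'I_n, (al < n.-1)%N -> b al != 0,
        alg_aut tau
      & forall i al, tau (Y i al) = torus_factor a b i al *: Y i al].

From HB Require Import structures.
From mathcomp Require Import all_boot all_order all_algebra.
From mathcomp Require Import zify ring.
Import Order.TTheory GRing.Theory Num.Theory.
Set Implicit Arguments. Unset Strict Implicit. Unset Printing Implicit Defensive.
Local Open Scope ring_scope.

(* Since q^2 <> 1, pushing the relation Y_jb Y_ia = Y_ia Y_jb - (q - q^-1) Y_ib Y_ja
   through sigma and comparing degree-two parts forces
   lambda_ia lambda_jb = lambda_ib lambda_ja, i.e. lambda_{i,alpha} = x_i y_alpha has
   rank one.  The comparison needs no PBW basis: R is mapped into a matrix algebra in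
   which products of three generators vanish and products of two are recorded by a
   bilinear form adapted to (i, j, alpha, beta).  Rescaling every generator by
   lambda^-1 is then a torus automorphism, and torus automorphisms preserve R_{>=2}. *)

Section AlgHom.
Variables (K : fieldType) (A B : algType K) (f : A -> B).
Hypothesis hf : alg_hom f.

Lemma alg_homD x y : f (x + y) = f x + f y. Proof. by case: hf. Qed.
Lemma alg_homM x y : f (x * y) = f x * f y. Proof. by case: hf. Qed.
Lemma alg_hom1 : f 1 = 1. Proof. by case: hf. Qed.
Lemma alg_homZ k x : f (k *: x) = k *: f x. Proof. by case: hf. Qed.

Lemma alg_hom0 : f 0 = 0.
Proof. by rewrite -(scale0r (0 : A)) alg_homZ scale0r. Qed.

Lemma alg_homB x y : f (x - y) = f x - f y.
Proof. by rewrite alg_homD -scaleN1r alg_homZ scaleN1r. Qed.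

Lemma alg_hom_sum (I : Type) (s : seq I) (F : I -> A) :
  f (\sum_(c <- s) F c) = \sum_(c <- s) f (F c).
Proof.
elim: s => [|c s IH]; first by rewrite !big_nil alg_hom0.
by rewrite !big_cons alg_homD IH.
Qed.

Lemma alg_hom_prod (I : Type) (s : seq I) (F : I -> A) :
  f (\prod_(c <- s) F c) = \prod_(c <- s) f (F c).
Proof.
elim: s => [|c s IH]; first by rewrite !big_nil alg_hom1.
by rewrite !big_cons alg_homM IH.
Qed.

End AlgHom.

Lemma alg_hom_comp (K : fieldType) (A B C : algType K) (f : A -> B) (g : B -> C) :
  alg_hom f -> alg_hom g -> alg_hom (g \o f).
Proof.
move=> hf hg; split => [x y|x y||k x] /=.
- by rewrite !alg_homD.
- by rewrite !alg_homM.
- by rewrite !alg_hom1.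
- by rewrite !alg_homZ.
Qed.

Lemma alg_hom_id (K : fieldType) (A : algType K) : alg_hom (@id A).
Proof. by []. Qed.

Lemma scalerMM (K : fieldType) (A : algType K) (c d : K) (x y : A) :
  (c *: x) * (d *: y) = (c * d) *: (x * y).
Proof. by rewrite -scalerAl -scalerAr scalerA. Qed.

Section TruncatedAlgebra.
Variables (K : fieldType) (T : finType) (B : T -> T -> K).
Local Notation m := #|T|.

(* Row 0, rows 1..m indexed by T, and row m+1: the generator attached to x sends
   e_0 to e_x and e_y to B x y e_(m+1), so a product of two generators is B x y
   times the corner matrix [trunc_top], and any longer product is 0. *)
Definition trunc_pos (x : T) : 'I_m.+2 := lift ord0 (widen_ord (leqnSn m) (enum_rank x)).

Definition trunc_top : 'M[K]_m.+2 := delta_mx ord_max ord0.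

Definition trunc_gen (x : T) : 'M[K]_m.+2 :=
  delta_mx (trunc_pos x) ord0 + \sum_y B x y *: delta_mx ord_max (trunc_pos y).

Lemma trunc_pos_neq0 x : (ord0 == trunc_pos x) = false.
Proof. by apply/negbTE; rewrite neq_lift. Qed.

Lemma trunc_pos_neq_max x : (trunc_pos x == ord_max) = false.
Proof. by apply/negbTE; rewrite -val_eqE /= /bump /= add1n eqSS ltn_eqF. Qed.

Lemma trunc_pos_inj : injective trunc_pos.
Proof.
move=> x y /lift_inj /(congr1 val) /= eq_xy.
by apply: enum_rank_inj; apply: val_inj.
Qed.

Lemma trunc_gen_mul x y : trunc_gen x * trunc_gen y = B x y *: trunc_top.
Proof.
rewrite -mulmxE mulmxDl !mulmxDr mul_delta_mx_cond trunc_pos_neq0 mulr0n add0r.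
rewrite mulmx_sumr big1 ?add0r => [|z _]; last first.
  by rewrite -scalemxAr mul_delta_mx_cond mulr0n scaler0.
rewrite mulmx_suml (bigD1 y) //= -scalemxAl mul_delta_mx_cond eqxx mulr1n.
rewrite big1 ?addr0 => [|z /negbTE nzy]; last first.
  by rewrite -scalemxAl mul_delta_mx_cond (inj_eq trunc_pos_inj) nzy mulr0n scaler0.
rewrite mulmx_suml big1 ?addr0 // => z _.
rewrite -scalemxAl mulmx_sumr big1 ?scaler0 // => w _.
by rewrite -scalemxAr mul_delta_mx_cond trunc_pos_neq_max mulr0n scaler0.
Qed.

Lemma trunc_gen_mul_top x : trunc_gen x * trunc_top = 0.
Proof.
rewrite -mulmxE mulmxDl mul_delta_mx_cond mulr0n add0r mulmx_suml big1 // => z _.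
by rewrite -scalemxAl mul_delta_mx_cond trunc_pos_neq_max mulr0n scaler0.
Qed.

Lemma trunc_top_mul_gen x : trunc_top * trunc_gen x = 0.
Proof.
rewrite -mulmxE mulmxDr mul_delta_mx_cond trunc_pos_neq0 mulr0n add0r.
rewrite mulmx_sumr big1 // => z _.
by rewrite -scalemxAr mul_delta_mx_cond mulr0n scaler0.
Qed.

Lemma trunc_top_mul : trunc_top * trunc_top = 0.
Proof. by rewrite -mulmxE mul_delta_mx_cond mulr0n. Qed.

Lemma trunc_top_coef k : (k *: trunc_top) ord_max ord0 = k.
Proof. by rewrite !mxE !eqxx mulr1. Qed.

Lemma trunc_gen_prod (w : seq T) :
  (2 <= size w)%N -> exists k, \prod_(p <- w) trunc_gen p = k *: trunc_top.
Proof.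
elim: w => [|x [|y [|z w]] IH] //= _.
  by exists (B x y); rewrite !big_cons big_nil mulr1 trunc_gen_mul.
rewrite big_cons; have [k ->] := IH isT.
by exists 0; rewrite -scalerAr trunc_gen_mul_top scaler0 scale0r.
Qed.

Lemma Rge2_trunc n (R : algType K) (Y : 'I_n -> 'I_n -> R) (v : 'I_n -> 'I_n -> T)
    (f : R -> 'M[K]_m.+2) :
  alg_hom f -> (forall i a, f (Y i a) = trunc_gen (v i a)) ->
  forall r, Rge Y 2 r -> exists k, f r = k *: trunc_top.
Proof.
move=> hf fY r [s [s_ge2 ->]]; rewrite alg_hom_sum //.
elim: s s_ge2 => [|c s IH] /=; first by exists 0; rewrite big_nil scale0r.
case/andP => c_ge2 /IH [k IHk].
rewrite big_cons IHk (alg_homZ hf) /qmono (alg_hom_prod hf).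
under eq_bigr => p _ do rewrite fY.
have [k' ->] : exists k', \prod_(p <- c.2) trunc_gen (v p.1 p.2) = k' *: trunc_top.
  by rewrite -(big_map (fun p => v p.1 p.2) xpredT); apply: trunc_gen_prod; rewrite size_map.
by exists (c.1 * k' + k); rewrite scalerA scalerDl.
Qed.

End TruncatedAlgebra.

(* The only nonzero values are those forced by the fourth relation for the
   quadruple (i, j, alpha, beta) = (i0, j0, a0, b0). *)
Definition cross_form (K : fieldType) (q : K) n (i0 j0 a0 b0 : 'I_n)
    (x y : 'I_n * 'I_n) : K :=
  if (x == (i0, b0)) && (y == (j0, a0)) then 1
  else if (x == (j0, a0)) && (y == (i0, b0)) then 1
  else if (x == (j0, b0)) && (y == (i0, a0)) then - (q - q^-1) else 0.

Lemma qmat_rel_cross_form (K : fieldType) (q : K) n (i0 j0 a0 b0 : 'I_n) :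
  (i0 < j0)%N -> (a0 < b0)%N ->
  qmat_rel q (fun i a => trunc_gen (cross_form q i0 j0 a0 b0) (i, a)).
Proof.
move=> lt_ij lt_ab.
split=> [i a b|i j a|i j a b|i j a b] lt1 => [||lt2|lt2];
  rewrite !trunc_gen_mul ?scalerA -?scalerBl; congr (_ *: _);
  rewrite /cross_form !xpair_eqE -!val_eqE /=; repeat (case: eqP => ? /=); try lia; ring.
Qed.

Definition rank_one (K : fieldType) n (c : 'I_n -> 'I_n -> K) : Prop :=
  forall i j a b, c i a * c j b = c i b * c j a.

Lemma rank_oneP (K : fieldType) n (c : 'I_n -> 'I_n -> K) :
  (forall i j a b : 'I_n, (i < j)%N -> (a < b)%N -> c i a * c j b = c i b * c j a) ->
  rank_one c.
Proof.
move=> lt_minor i j a b.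
case: (ltngtP i j) => [lt_ij|lt_ji|eq_ij]; last by rewrite (val_inj eq_ij) mulrC.
- case: (ltngtP a b) => [lt_ab|lt_ba|eq_ab]; last by rewrite (val_inj eq_ab).
  + exact: lt_minor.
  + by rewrite (lt_minor i j b a).
- case: (ltngtP a b) => [lt_ab|lt_ba|eq_ab]; last by rewrite (val_inj eq_ab).
  + by rewrite [LHS]mulrC -(lt_minor j i a b) // mulrC.
  + by rewrite [LHS]mulrC (lt_minor j i b a) // mulrC.
Qed.

Lemma rank_one_inv (K : fieldType) n (c : 'I_n -> 'I_n -> K) :
  rank_one c -> rank_one (fun i a => (c i a)^-1).
Proof. by move=> c1 i j a b; rewrite -!invfM c1. Qed.

Lemma sub_inv_neq0 (K : fieldType) (q : K) : q != 0 -> q ^+ 2 != 1 -> q - q^-1 != 0.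
Proof.
move=> q_neq0; apply: contraNN; rewrite subr_eq0 => /eqP q_inv.
by rewrite expr2 {2}q_inv mulfV.
Qed.

Lemma leading_coef_rank_one (K : fieldType) (q : K) n (R : algType K)
    (Y : 'I_n -> 'I_n -> R) (sigma : R -> R) (lambda : 'I_n -> 'I_n -> K) :
  q - q^-1 != 0 -> is_Oq_Mn q Y -> alg_hom sigma ->
  (forall i a, Rge Y 2 (sigma (Y i a) - lambda i a *: Y i a)) ->
  rank_one lambda.
Proof.
move=> qq [relY univY] hs sigmaY; apply: rank_oneP => i j a b lt_ij lt_ab.
pose B := cross_form q i j a b.
have [[f [hf fY]] _] := univY _ _ (qmat_rel_cross_form q lt_ij lt_ab).
have fsigmaY x y :
    exists k, f (sigma (Y x y)) = lambda x y *: trunc_gen B (x, y) + k *: trunc_top K _.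
  have [k fk] := Rge2_trunc hf fY (sigmaY x y).
  by exists k; rewrite -fk -fY -(alg_homZ hf) -(alg_homD hf) addrC subrK.
have fsigmaYM x y x' y' : f (sigma (Y x y)) * f (sigma (Y x' y')) =
    (lambda x y * lambda x' y' * B (x, y) (x', y')) *: trunc_top K _.
  have [k ->] := fsigmaY x y; have [k' ->] := fsigmaY x' y'.
  rewrite mulrDl !mulrDr !scalerMM trunc_gen_mul trunc_top_mul trunc_gen_mul_top.
  by rewrite trunc_top_mul_gen !scaler0 !addr0 scalerA mulrC.
case: relY => _ _ _ /(_ i j a b lt_ij lt_ab) /(congr1 (f \o sigma)) /=.
rewrite !(alg_homB hs, alg_homZ hs, alg_homM hs) !(alg_homB hf, alg_homZ hf, alg_homM hf).
rewrite !fsigmaYM scalerA -scalerBl => /(congr1 (fun M => @fun_of_matrix K _ _ M ord_max ord0)).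
have [ij_neq ab_neq] : i != j /\ a != b by rewrite -!val_eqE /=; split; lia.
rewrite !trunc_top_coef /B /cross_form !xpair_eqE !eqxx !(negbTE ij_neq, negbTE ab_neq).
rewrite eq_sym (negbTE ij_neq) eq_sym (negbTE ab_neq) /= => minor.
apply: (mulfI qq); transitivity (- (lambda j b * lambda i a * - (q - q^-1))); first ring.
by rewrite minor; ring.
Qed.

Section Rescaling.
Variables (K : fieldType) (q : K) (n : nat) (R : algType K) (Y : 'I_n -> 'I_n -> R).
Implicit Type c : 'I_n -> 'I_n -> K.

Lemma qmat_rel_rescale c : qmat_rel q Y -> rank_one c -> qmat_rel q (fun i a => c i a *: Y i a).
Proof.
case=> rel1 rel2 rel3 rel4 c1; split.
- by move=> i a b lt_ab; rewrite !scalerMM rel1 // !scalerA; congr (_ *: _); ring.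
- by move=> i j a lt_ij; rewrite !scalerMM rel2 // !scalerA; congr (_ *: _); ring.
- by move=> i j a b lt_ij lt_ba; rewrite !scalerMM rel3 //; congr (_ *: _); ring.
- move=> i j a b lt_ij lt_ab; rewrite !scalerMM rel4 // scalerBr !scalerA.
  by congr (_ *: _ - _ *: _); [ring | rewrite -c1; ring].
Qed.

Lemma rescale_aut c : is_Oq_Mn q Y -> (forall i a, c i a != 0) -> rank_one c ->
  exists tau : R -> R, alg_aut tau /\ forall i a, tau (Y i a) = c i a *: Y i a.
Proof.
move=> [relY univY] c_neq0 c1.
have [[t [ht tY]] _] := univY _ _ (qmat_rel_rescale relY c1).
have [[t' [ht' t'Y]] _] := univY _ _ (qmat_rel_rescale relY (rank_one_inv c1)).
have [_ uniqY] := univY _ _ relY.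
have scale_cancel (f g : R -> R) (d e : 'I_n -> 'I_n -> K) : alg_hom f -> alg_hom g ->
    (forall i a, f (Y i a) = d i a *: Y i a) -> (forall i a, g (Y i a) = e i a *: Y i a) ->
    (forall i a, d i a * e i a = 1) -> cancel f g.
  move=> hf hg fY gY de x.
  apply: (uniqY _ _ (alg_hom_comp hf hg) (@alg_hom_id _ _)) => // i a /=.
  by rewrite fY (alg_homZ hg) gY scalerA de scale1r.
exists t; split=> //; split=> //; exists t'.
- by apply: scale_cancel ht ht' tY t'Y _ => i a; rewrite mulfV.
- by apply: scale_cancel ht' ht t'Y tY _ => i a; rewrite mulVf.
Qed.

Lemma Rge_rescale c (tau : R -> R) (d : nat) (r : R) :
  alg_hom tau -> (forall i a, tau (Y i a) = c i a *: Y i a) ->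
  Rge Y d r -> Rge Y d (tau r).
Proof.
move=> ht tauY [s [s_ge ->]].
have tau_mono w : tau (qmono Y w) = (\prod_(p <- w) c p.1 p.2) *: qmono Y w.
  elim: w => [|p w IH]; first by rewrite /qmono !big_nil (alg_hom1 ht) scale1r.
  by rewrite /qmono !big_cons (alg_homM ht) tauY -/(qmono Y w) IH scalerMM.
exists [seq (x.1 * \prod_(p <- x.2) c p.1 p.2, x.2) | x <- s]; split; first by rewrite all_map.
rewrite (alg_hom_sum ht) big_map; apply: eq_bigr => x _ /=.
by rewrite (alg_homZ ht) tau_mono scalerA.
Qed.

End Rescaling.

(* c_{i,alpha} = c_{i,n} * (c_{1,alpha} / c_{1,n}): the last column gives the a_i,
   the first row (normalised at the last column, so b_n = 1) gives the b_alpha. *)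
Lemma rank_one_torus_factor (K : fieldType) n (c : 'I_n -> 'I_n -> K) :
  (0 < n)%N -> (forall i a, c i a != 0) -> rank_one c ->
  exists a b : 'I_n -> K,
    [/\ forall i, a i != 0, forall al, b al != 0 & forall i al, c i al = torus_factor a b i al].
Proof.
move=> n_gt0 c_neq0 c1.
have lt_last : (n.-1 < n)%N by rewrite prednK.
pose last := Ordinal lt_last; pose first := Ordinal n_gt0.
exists (fun i => c i last), (fun al => c first al / c first last).
split=> [//|al|i al]; first by rewrite mulf_neq0 ?invr_eq0.
rewrite /torus_factor; case: ifP => [_|al_last].
  by rewrite mulrA -(c1 i first al last) mulfK.
have -> : al = last by apply: val_inj => /=; move: (ltn_ord al) al_last; lia.
by rewrite mulr1.
Qed.

Theorem lemma1p4 (K : fieldType) (q : K) (n : nat)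
  (q_neq0 : q != 0)
  (q_not_root : forall k : nat, (0 < k)%N -> q ^+ k != 1)
  (n_ge3 : (3 <= n)%N)
  (R : algType K) (Y : 'I_n -> 'I_n -> R) (HR : is_Oq_Mn q Y)
  (sigma : R -> R) (Hsigma : alg_aut sigma)
  (Hlin : exists lambda : 'I_n -> 'I_n -> K,
            (forall i al, lambda i al != 0) /\
            (forall i al, Rge Y 2 (sigma (Y i al) - lambda i al *: Y i al))) :
  exists tau : R -> R,
    is_torus_aut Y tau /\
    (forall i al, Rge Y 2 (tau (sigma (Y i al)) - Y i al)).
Proof.
case: Hlin => lambda [lambda_neq0 sigmaY].
have qq : q - q^-1 != 0 by apply: sub_inv_neq0 => //; apply: q_not_root.
have lambda1 := leading_coef_rank_one qq HR Hsigma.1 sigmaY.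
pose c i a := (lambda i a)^-1.
have c_neq0 i a : c i a != 0 by rewrite invr_eq0.
have [tau [tau_aut tauY]] := rescale_aut HR c_neq0 (rank_one_inv lambda1).
have [|a [b [a_neq0 b_neq0 c_torus]]] := rank_one_torus_factor _ c_neq0 (rank_one_inv lambda1).
  by apply: leq_trans n_ge3.
have htau := tau_aut.1.
exists tau; split=> [|i al].
  by exists a, b; split=> // i al; rewrite -c_torus.
have -> : tau (sigma (Y i al)) - Y i al = tau (sigma (Y i al) - lambda i al *: Y i al).
  by rewrite (alg_homB htau) (alg_homZ htau) tauY scalerA mulfV ?scale1r.
exact: Rge_rescale htau tauY (sigmaY i al).
Qed.
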